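(* Let $\Psi$ be a universal resource. Then $E_g(\Psi)=\infty$.
   Context: For an $N$-qubit $|\psi\rangle$ and an $n$-qubit $|\phi\rangle$, $n\le N$, write $|\psi\rangle\geq_{\mathrm{LOCC}}|\phi\rangle$ if for some set $A$ of $n$ qubits the transformation $|\psi\rangle\to|\phi\rangle^A|0\rangle^{\bar A}$ is achievable exactly and with probability one by LOCC (each qubit a separate party). A resource is an infinite family $\Psi$ of multi-qubit pure states; it is universal if for every $n$ and every $n$-qubit $|\phi\rangle$ some $|\psi\rangle\in\Psi$ has $|\psi\rangle\geq_{\mathrm{LOCC}}|\phi\rangle$. The geometric measure of an $N$-qubit state is $E_g(|\psi\rangle)=-\log_2\max_{|\varphi\rangle=|\varphi_1\rangle\otimes\cdots\otimes|\varphi_N\rangle}|\langle\psi|\varphi\rangle|^2$, the maximum over normalized product states, and $E_g(\Psi):=\sup_{|\psi\rangle\in\Psi}E_g(|\psi\rangle)$. *)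

From HB Require Import structures.
From mathcomp Require Import all_boot all_order all_algebra.
From mathcomp Require Import complex.
From mathcomp Require Import all_classical all_reals all_analysis.

Set Implicit Arguments.
Unset Strict Implicit.
Unset Printing Implicit Defensive.

Import Order.TTheory GRing.Theory Num.Theory.
Local Open Scope ring_scope.
Local Open Scope classical_set_scope.

Section QubitDefs.
Variable R : realType.
Local Notation C := (R[i]).

(** Computational basis of N qubits: bit strings x : 'I_N -> 'I_2. *)
Notation bits N := {ffun 'I_N -> 'I_2}.

(** An (unnormalized) N-qubit pure state vector, in the computational basis. *)
Notation qstate N := {ffun bits N -> C}.

Definition sqnorm N (psi : qstate N) : C := \sum_(x : bits N) psi x * conjc (psi x).

Definition normalized N (psi : qstate N) : Prop := sqnorm psi = 1.

Definition setbit N (x : bits N) (i : 'I_N) (b : 'I_2) : bits N :=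
  [ffun j => if j == i then b else x j].

(** Apply the 2x2 operator A to qubit i:  (A on qubit i) (x) (identity elsewhere). *)
Definition apply_local N (i : 'I_N) (A : 'M[C]_2) (psi : qstate N) : qstate N :=
  [ffun x : bits N => \sum_(b : 'I_2) A (x i) b * psi (setbit x i b)].

Definition adj (A : 'M[C]_2) : 'M[C]_2 := \matrix_(i, j) conjc (A j i).

Definition complete_kraus (m : nat) (K : 'I_m -> 'M[C]_2) : Prop :=
  \sum_(k < m) (adj (K k) *m K k) = 1%:M.

(** Finite-round LOCC protocols (trees): at each node one party i performs a
    local measurement with Kraus operators K_0..K_{m-1} (outcome broadcast
    classically), and the protocol continues depending on the outcome. *)
Inductive protocol (N : nat) : Type :=
| Stop : protocol N
| Meas : forall (i : 'I_N) (m : nat), ('I_m -> 'M[C]_2) -> ('I_m -> protocol N) -> protocol N.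

(** [achieves P psi phi]: every branch of the protocol P applied to psi ends
    (exactly) in the target state phi, up to a scalar factor (which accounts
    for normalization/branch probability and global phase; zero-probability
    branches give the zero vector).  Together with completeness of every
    measurement this is exactly "psi -> phi with probability one". *)
Fixpoint achieves N (P : protocol N) (psi phi : qstate N) : Prop :=
  match P with
  | Stop => exists c : C, forall x, psi x = c * phi x
  | Meas i m K next =>
      complete_kraus K /\ forall k : 'I_m, achieves (next k) (apply_local i (K k) psi) phi
  end.

Definition LOCC_transform N (psi phi : qstate N) : Prop :=
  exists P : protocol N, achieves P psi phi.

(** |phi>^A |0>^{bar A}: the n-qubit state phi placed on the qubits f(0..n-1)
    (A = image of the injection f), all other qubits in |0>. *)
Definition embed_state n N (f : 'I_n -> 'I_N) (phi : qstate n) : qstate N :=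
  [ffun x : bits N =>
     if [forall j : 'I_N, (j \notin codom f) ==> (x j == ord0)]
     then phi [ffun k => x (f k)] else 0].

Definition locc_ge N n (psi : qstate N) (phi : qstate n) : Prop :=
  (n <= N)%N /\
  exists f : 'I_n -> 'I_N, injective f /\ LOCC_transform psi (embed_state f phi).

Definition mqstate := {N : nat & qstate N}.

Definition resource (Psi : set mqstate) : Prop :=
  infinite_set Psi /\ forall s, Psi s -> normalized (projT2 s).

Definition universal (Psi : set mqstate) : Prop :=
  forall (n : nat) (phi : qstate n), normalized phi ->
    exists2 s, Psi s & locc_ge (projT2 s) phi.

Definition product_state N (u : 'I_N -> 'I_2 -> C) : qstate N :=
  [ffun x : bits N => \prod_(i < N) u i (x i)].

Definition normalized_qubit (v : 'I_2 -> C) : Prop :=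
  \sum_(b : 'I_2) v b * conjc (v b) = 1.

Definition inner N (psi phi : qstate N) : C := \sum_(x : bits N) conjc (psi x) * phi x.

Definition product_overlaps N (psi : qstate N) : set R :=
  [set complex.Re (inner psi (product_state u) * conjc (inner psi (product_state u))) |
     u in [set u : 'I_N -> 'I_2 -> C | forall i, normalized_qubit (u i)]].

Definition log2 (x : R) : R := ln x / ln 2.

(** Geometric measure E_g(psi) = - log2 max_{product} |<psi|varphi>|^2
    (the max exists by compactness; we write it as the supremum). *)
Definition Eg N (psi : qstate N) : R := - log2 (sup (product_overlaps psi)).

Definition Eg_family (Psi : set mqstate) : \bar R :=
  ereal_sup [set (Eg (projT2 s))%:E | s in Psi].

End QubitDefs.

(* Say that psi has product overlap at most B if |<psi|u>|^2 <= B <psi|psi> for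
   every normalized product state u.  This property propagates backwards along
   LOCC protocols.  For a local measurement on qubit i, Cauchy-Schwarz on that
   qubit bounds |<psi|u>|^2 by the squared norm of the vector obtained by
   contracting psi with the other factors of u; completeness of the Kraus
   operators distributes that norm over the outcomes, and in each outcome
   choosing the i-th factor of u optimally turns the bound on the branch into a
   bound on its share.  The state of k Bell pairs, padded with |0> qubits, has
   product overlap at most 2^-k, so every state that reaches it exactly has
   E_g >= k; a universal resource reaches it for every k. *)

From HB Require Import structures.
From mathcomp Require Import all_boot all_order all_algebra.
From mathcomp Require Import complex.
From mathcomp Require Import all_classical all_reals all_analysis.
From mathcomp Require Import ring lra.

Set Implicit Arguments.
Unset Strict Implicit.
Unset Printing Implicit Defensive.
Import Order.TTheory GRing.Theory Num.Theory.
Local Open Scope ring_scope.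
Local Open Scope complex_scope.

Section Qubits.
Variable R : realType.
Local Notation C := R[i].
Local Notation bits N := {ffun 'I_N -> 'I_2}.
Local Notation qstate N := {ffun bits N -> C}.

Lemma sum_bit (F : 'I_2 -> C) : \sum_b F b = F ord0 + F ord_max.
Proof. by rewrite big_ord_recl big_ord1; congr (_ + F _); apply/val_inj. Qed.

Lemma normalized_qubit_sum (q : 'I_2 -> C) :
  normalized_qubit q -> \sum_b `|q b| ^+ 2 = 1.
Proof. by move=> <-; apply: eq_bigr => b _; rewrite sqr_normc. Qed.

Lemma normalized_qubit_le1 (q : 'I_2 -> C) b : normalized_qubit q -> `|q b| ^+ 2 <= 1.
Proof.
move/normalized_qubit_sum <-; rewrite (bigD1 b) //= lerDl.
by apply: sumr_ge0 => a _; exact/exprn_ge0/normr_ge0.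
Qed.

Lemma normalized_qubit_delta (b : 'I_2) : normalized_qubit (fun a => (a == b)%:R : C).
Proof.
rewrite /normalized_qubit (bigD1 b) // eqxx conjc1 mulr1 big1 /= ?addr0 //.
by move=> a /negbTE ->; rewrite mul0r.
Qed.

(* Lagrange's identity: the defect in Cauchy-Schwarz is |q0 conj p1 - q1 conj p0|^2. *)
Lemma sqr_normc_dot_le (p q : 'I_2 -> C) :
  `|\sum_b p b * q b| ^+ 2 <= (\sum_b `|p b| ^+ 2) * (\sum_b `|q b| ^+ 2).
Proof.
rewrite !sum_bit -subr_ge0 !sqr_normc.
set p0 := p ord0; set p1 := p ord_max; set q0 := q ord0; set q1 := q ord_max.
have -> : (p0 * conjc p0 + p1 * conjc p1) * (q0 * conjc q0 + q1 * conjc q1)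
            - (p0 * q0 + p1 * q1) * conjc (p0 * q0 + p1 * q1)
          = `|q0 * conjc p1 - q1 * conjc p0| ^+ 2.
  by rewrite sqr_normc !(rmorphD, rmorphM, rmorphB, rmorphN) /= !conjcK; ring.
exact/exprn_ge0/normr_ge0.
Qed.

Lemma sqr_normc_dot_attained (z : 'I_2 -> C) :
  exists2 q : 'I_2 -> C, normalized_qubit q &
    `|\sum_a q a * z a| ^+ 2 = \sum_a `|z a| ^+ 2.
Proof.
set s := \sum_a `|z a| ^+ 2.
have [s0 | s_neq0] := eqVneq s 0.
  exists (fun a => (a == ord0)%:R); first exact: normalized_qubit_delta.
  apply/le_anti/andP; split; last by rewrite s0; exact/exprn_ge0/normr_ge0.
  by apply: le_trans (sqr_normc_dot_le _ _) _; rewrite -/s s0 mulr0.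
set r := sqrtc s.
have r_ge0 : 0 <= r by rewrite sqrtc_ge0 sumr_ge0 // => a _; exact/exprn_ge0/normr_ge0.
have r_neq0 : r != 0 by rewrite sqrtc_eq0.
have rJ : conjc r = r by rewrite [r]complexE (ger0_Im r_ge0) mulr0 addr0 conjc_real.
have rr : r * r = s by rewrite -expr2 sqr_sqrtc.
have qzE a : conjc (z a) / r * z a = `|z a| ^+ 2 / r.
  by rewrite sqr_normc mulrAC [conjc _ * _]mulrC.
exists (fun a => conjc (z a) / r).
  rewrite /normalized_qubit.
  under eq_bigr => a _ do rewrite rmorphM fmorphV /= rJ conjcK mulrA qzE.
  by rewrite -!mulr_suml -/s -rr mulfK // divff.
rewrite (eq_bigr _ (fun a _ => qzE a)) -mulr_suml -/s -rr mulfK //.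
by rewrite ger0_norm // expr2.
Qed.

Lemma complete_kraus_sqr_norm m (K : 'I_m -> 'M[C]_2) (w : 'I_2 -> C) :
  complete_kraus K ->
  \sum_k \sum_a `|\sum_b K k a b * w b| ^+ 2 = \sum_b `|w b| ^+ 2.
Proof.
move=> HK.
have Kdelta b c : \sum_k \sum_a conjc (K k a c) * K k a b = (c == b)%:R.
  have := congr1 (fun M : 'M[C]_2 => M c b) HK.
  rewrite summxE mxE => <-; apply: eq_bigr => k _.
  by rewrite mxE; apply: eq_bigr => a _; rewrite mxE.
transitivity (\sum_b \sum_c w b * conjc (w c) *
                (\sum_k \sum_a conjc (K k a c) * K k a b)).
  under eq_bigr => k _ do under eq_bigr => a _ do
    rewrite sqr_normc rmorph_sum mulr_suml.
  under eq_bigr => k _ do under eq_bigr => a _ do under eq_bigr => b _ do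
    rewrite mulr_sumr.
  under eq_bigr => k _ do rewrite exchange_big.
  rewrite exchange_big; apply: eq_bigr => b _.
  under eq_bigr => k _ do rewrite exchange_big.
  rewrite exchange_big; apply: eq_bigr => c _.
  rewrite mulr_sumr; apply: eq_bigr => k _.
  rewrite mulr_sumr; apply: eq_bigr => a _.
  by rewrite rmorphM; ring.
apply: eq_bigr => b _; under eq_bigr => c _ do rewrite Kdelta.
rewrite (bigD1 b) //= eqxx mulr1 big1 ?addr0 ?sqr_normc // => c /negbTE.
by rewrite eq_sym => ->; rewrite mulr0.
Qed.

Lemma sqnormE N (v : qstate N) : sqnorm v = \sum_x `|v x| ^+ 2.
Proof. by apply: eq_bigr => x _; rewrite sqr_normc. Qed.

Section SplitQubit.
Variables (N : nat) (i : 'I_N).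

Lemma setbitE (x : bits N) b j : setbit x i b j = if j == i then b else x j.
Proof. by rewrite ffunE. Qed.

Lemma setbit_at (x : bits N) b : setbit x i b i = b.
Proof. by rewrite setbitE eqxx. Qed.

Lemma setbit_ne (x : bits N) b j : j != i -> setbit x i b j = x j.
Proof. by rewrite setbitE => /negbTE ->. Qed.

Lemma setbitK (x : bits N) a b : setbit (setbit x i a) i b = setbit x i b.
Proof. by apply/ffunP => j; rewrite !setbitE; case: eqP. Qed.

Lemma setbit_id (x : bits N) : setbit x i (x i) = x.
Proof. by apply/ffunP => j; rewrite setbitE; case: eqP => // ->. Qed.

Lemma sum_bits_at (F : bits N -> C) :
  \sum_x F x = \sum_(y : bits N | y i == ord0) \sum_b F (setbit y i b).
Proof.
rewrite exchange_big (partition_big (fun x : bits N => x i) xpredT) //=.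
apply: eq_bigr => b _.
rewrite (reindex_onto (fun y => setbit y i b) (fun x => setbit x i ord0)) /=.
  apply: eq_bigl => y; rewrite setbit_at eqxx setbitK /=.
  by apply/eqP/eqP => [<-|<-]; rewrite ?setbit_at ?setbit_id.
by move=> x /eqP <-; rewrite setbitK setbit_id.
Qed.

Lemma apply_local_setbit (A : 'M[C]_2) (v : qstate N) (y : bits N) a :
  apply_local i A v (setbit y i a) = \sum_b A a b * v (setbit y i b).
Proof. by rewrite ffunE setbit_at; apply: eq_bigr => b _; rewrite setbitK. Qed.

Lemma sqnorm_complete_kraus m (K : 'I_m -> 'M[C]_2) (v : qstate N) :
  complete_kraus K -> \sum_k sqnorm (apply_local i (K k) v) = sqnorm v.
Proof.
move=> HK; under eq_bigr => k _ do rewrite sqnormE (sum_bits_at).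
rewrite exchange_big sqnormE (sum_bits_at); apply: eq_bigr => y _.
rewrite -(complete_kraus_sqr_norm (fun b => v (setbit y i b)) HK).
by apply: eq_bigr => k _; apply: eq_bigr => a _; rewrite apply_local_setbit.
Qed.

Definition prod_except (u : 'I_N -> 'I_2 -> C) (x : bits N) : C :=
  \prod_(j | j != i) u j (x j).

Lemma product_stateE u x : product_state u x = u i (x i) * prod_except u x.
Proof. by rewrite ffunE (bigD1 i). Qed.

Lemma prod_except_setbit u x b : prod_except u (setbit x i b) = prod_except u x.
Proof. by apply: eq_bigr => j /setbit_ne ->. Qed.

(* The coefficient vector of the bra <v| once every qubit but i has been
   contracted against the product state u. *)
Definition contract_except (v : qstate N) u (b : 'I_2) : C :=
  \sum_(y : bits N | y i == ord0) conjc (v (setbit y i b)) * prod_except u y.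

Lemma inner_product_state_at v u :
  inner v (product_state u) = \sum_b u i b * contract_except v u b.
Proof.
rewrite /inner sum_bits_at exchange_big; apply: eq_bigr => b _.
rewrite mulr_sumr; apply: eq_bigr => y _.
by rewrite product_stateE setbit_at prod_except_setbit mulrCA.
Qed.

Lemma contract_except_apply_local A v u a :
  contract_except (apply_local i A v) u a
  = \sum_b conjc (A a b) * contract_except v u b.
Proof.
rewrite /contract_except.
under eq_bigr => y _ do rewrite apply_local_setbit rmorph_sum mulr_suml.
rewrite exchange_big; apply: eq_bigr => b _.
by rewrite mulr_sumr; apply: eq_bigr => y _; rewrite rmorphM mulrA.
Qed.

Lemma eq_contract_except v u u' : (forall j, j != i -> u j = u' j) ->
  contract_except v u = contract_except v u'.
Proof.
move=> Huu'; apply/funext => b; apply: eq_bigr => y _.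
by congr (_ * _); apply: eq_bigr => j /Huu' ->.
Qed.

End SplitQubit.

Definition normalized_product N (u : 'I_N -> 'I_2 -> C) : Prop :=
  forall i, normalized_qubit (u i).

Definition product_overlap_le N (psi : qstate N) (B : R) : Prop :=
  forall u, normalized_product u ->
    `|inner psi (product_state u)| ^+ 2 <= sqnorm psi * B%:C.

Lemma product_overlap_le_scale N (v t : qstate N) c B :
  (forall x, v x = c * t x) -> product_overlap_le t B -> product_overlap_le v B.
Proof.
move=> Hv Ht u Hu.
have -> : inner v (product_state u) = conjc c * inner t (product_state u).
  by rewrite /inner mulr_sumr; apply: eq_bigr => x _; rewrite Hv rmorphM mulrA.
have -> : sqnorm v = `|c| ^+ 2 * sqnorm t.
  by rewrite !sqnormE mulr_sumr; apply: eq_bigr => x _; rewrite Hv normrM exprMn.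
by rewrite normrM exprMn normcJ -[X in _ <= X]mulrA ler_wpM2l ?exprn_ge0 ?Ht.
Qed.

Lemma product_overlap_le_measure N (i : 'I_N) m (K : 'I_m -> 'M[C]_2) v B :
  complete_kraus K -> (forall k, product_overlap_le (apply_local i (K k) v) B) ->
  product_overlap_le v B.
Proof.
move=> HK Hk u Hu.
set w := contract_except i v u.
pose z k a := \sum_b conjc (K k a b) * w b.
have z_le k : \sum_a `|z k a| ^+ 2 <= sqnorm (apply_local i (K k) v) * B%:C.
  have [q Hq <-] := sqr_normc_dot_attained (z k).
  pose u' j := if j == i then q else u j.
  have Hu' : normalized_product u' by move=> j; rewrite /u'; case: eqP.
  have contract_u' : contract_except i (apply_local i (K k) v) u' = z k.
    apply/funext => a; rewrite contract_except_apply_local.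
    by rewrite (@eq_contract_except _ _ _ u' u) // => j /negbTE; rewrite /u' => ->.
  by have := Hk k u' Hu'; rewrite (inner_product_state_at i) contract_u' /u' eqxx.
rewrite (inner_product_state_at i); apply: le_trans (sqr_normc_dot_le _ _) _.
rewrite normalized_qubit_sum // mul1r -(sqnorm_complete_kraus i v HK) mulr_suml.
have -> : \sum_b `|w b| ^+ 2 = \sum_k \sum_a `|z k a| ^+ 2.
  transitivity (\sum_b `|conjc (w b)| ^+ 2).
    by apply: eq_bigr => b _; rewrite normcJ.
  rewrite -(complete_kraus_sqr_norm _ HK); apply: eq_bigr => k _.
  apply: eq_bigr => a _; rewrite -normcJ rmorph_sum; congr (`|_| ^+ 2).
  by apply: eq_bigr => b _; rewrite rmorphM /= conjcK.
by apply: ler_sum => k _; exact: z_le.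
Qed.

Lemma achieves_product_overlap_le N (P : protocol R N) v t B :
  achieves P v t -> product_overlap_le t B -> product_overlap_le v B.
Proof.
elim: P v => [|i m K next IH] v /=.
  by case=> c Hc; apply: product_overlap_le_scale Hc.
case=> HK Hnext Ht; apply: (product_overlap_le_measure HK) => k.
exact: IH (Hnext k) Ht.
Qed.

Section Embedding.
Variables (n N : nat) (f : 'I_n -> 'I_N).
Hypothesis f_inj : injective f.

Definition zero_off_codom (x : bits N) : bool :=
  [forall j, (j \notin codom f) ==> (x j == ord0)].

Definition restrict (x : bits N) : bits n := [ffun k => x (f k)].

Definition extend (y : bits n) : bits N :=
  [ffun j => if [pick k | f k == j] is Some k then y k else ord0].

Lemma extend_f y k : extend y (f k) = y k.
Proof.
rewrite ffunE; case: pickP => [k' /eqP /f_inj -> // | /(_ k)].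
by rewrite eqxx.
Qed.

Lemma extend_notin_codom y j : j \notin codom f -> extend y j = ord0.
Proof. by rewrite ffunE; case: pickP => // k /eqP <-; rewrite codom_f. Qed.

Lemma restrict_extend y : restrict (extend y) = y.
Proof. by apply/ffunP => k; rewrite ffunE extend_f. Qed.

Lemma zero_off_codom_extend y : zero_off_codom (extend y).
Proof. by apply/forallP => j; apply/implyP => /extend_notin_codom ->. Qed.

Lemma extend_restrict x : zero_off_codom x -> extend (restrict x) = x.
Proof.
move/forallP => x0; apply/ffunP => j; have [/codomP [k ->] | jf] := boolP (j \in codom f).
  by rewrite extend_f ffunE.
by rewrite extend_notin_codom // (eqP (implyP (x0 j) jf)).
Qed.

Lemma sum_zero_off_codom (F : bits N -> C) :
  \sum_(x | zero_off_codom x) F x = \sum_y F (extend y).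
Proof.
rewrite (reindex_onto extend restrict extend_restrict); apply: eq_bigl => y.
by rewrite zero_off_codom_extend restrict_extend eqxx.
Qed.

Lemma embed_stateE (phi : qstate n) x :
  embed_state f phi x = if zero_off_codom x then phi (restrict x) else 0.
Proof. by rewrite ffunE. Qed.

Lemma sum_embed_state (phi : qstate n) (F : C -> bits N -> C) :
  (forall x, F 0 x = 0) ->
  \sum_x F (embed_state f phi x) x = \sum_y F (phi y) (extend y).
Proof.
move=> F0; rewrite (bigID zero_off_codom) /= [X in _ + X]big1 ?addr0.
  rewrite sum_zero_off_codom; apply: eq_bigr => y _.
  by rewrite embed_stateE zero_off_codom_extend restrict_extend.
by move=> x /negbTE x0; rewrite embed_stateE x0.
Qed.

Lemma sqnorm_embed_state (phi : qstate n) : sqnorm (embed_state f phi) = sqnorm phi.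
Proof.
by rewrite /sqnorm (@sum_embed_state phi (fun c _ => c * conjc c)) // => x; rewrite mul0r.
Qed.

Lemma product_state_extend (u : 'I_N -> 'I_2 -> C) y :
  product_state u (extend y)
  = product_state (fun k => u (f k)) y * \prod_(j | j \notin codom f) u j ord0.
Proof.
rewrite !ffunE (bigID (fun j => j \in codom f)) /=; congr (_ * _).
  rewrite (eq_bigl (mem (f @: [set: 'I_n]))) => [|j]; last first.
    by apply/codomP/imsetP => [[k ->] | [k _ ->]]; exists k.
  rewrite big_imset /=; last by move=> k k' _ _ /f_inj.
  by apply: eq_big => [k | k _]; rewrite ?inE ?extend_f.
by apply: eq_bigr => j /extend_notin_codom ->.
Qed.

Lemma product_overlap_le_embed_state (phi : qstate n) B :
  product_overlap_le phi B -> product_overlap_le (embed_state f phi) B.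
Proof.
move=> Hphi u Hu; rewrite sqnorm_embed_state.
rewrite /inner (@sum_embed_state phi (fun c x => conjc c * product_state u x));
  last by move=> x; rewrite rmorph0 mul0r.
under eq_bigr => y _ do rewrite product_state_extend mulrA.
rewrite -mulr_suml normrM exprMn; apply: le_trans (Hphi _ (fun k => Hu (f k))).
rewrite ler_piMr ?exprn_ge0 // normr_prod -prodrXl.
by apply: prodr_ile1 => j _; rewrite exprn_ge0 ?normr_ge0 ?normalized_qubit_le1.
Qed.

End Embedding.

Section BellPairs.
Variable k : nat.

Definition paired (x : bits (k + k)) : bool :=
  [forall i : 'I_k, x (lshift k i) == x (rshift k i)].

Definition bell_amplitude : C := (Num.sqrt (2^-1 : R) ^+ k)%:C.

(* k Bell pairs (|00> + |11>)/sqrt 2, the j-th one on qubits j and k + j. *)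
Definition bell_pairs : qstate (k + k) :=
  [ffun x => if paired x then bell_amplitude else 0].

Definition double (y : bits k) : bits (k + k) :=
  [ffun j => match fintype.split j with inl i | inr i => y i end].

Definition left_half (x : bits (k + k)) : bits k := [ffun i => x (lshift k i)].

Lemma double_lshift y i : double y (lshift k i) = y i.
Proof. by rewrite ffunE (unsplitK (inl i)). Qed.

Lemma double_rshift y i : double y (rshift k i) = y i.
Proof. by rewrite ffunE (unsplitK (inr i)). Qed.

Lemma paired_double y : paired (double y).
Proof. by apply/forallP => i; rewrite double_lshift double_rshift. Qed.

Lemma left_half_double y : left_half (double y) = y.
Proof. by apply/ffunP => i; rewrite ffunE double_lshift. Qed.

Lemma sum_paired (F : bits (k + k) -> C) :
  \sum_(x | paired x) F x = \sum_y F (double y).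
Proof.
rewrite (reindex_onto double left_half) => [|x /forallP xP].
  by apply: eq_bigl => y; rewrite paired_double left_half_double eqxx.
apply/ffunP => j; rewrite -(splitK j); case: (fintype.split j) => i /=.
  by rewrite double_lshift ffunE.
by rewrite double_rshift ffunE (eqP (xP i)).
Qed.

Lemma sum_bell_pairs (F : C -> bits (k + k) -> C) : (forall x, F 0 x = 0) ->
  \sum_x F (bell_pairs x) x = \sum_y F bell_amplitude (double y).
Proof.
move=> F0; rewrite (bigID paired) /= [X in _ + X]big1 ?addr0.
  by rewrite sum_paired; apply: eq_bigr => y _; rewrite ffunE paired_double.
by move=> x /negbTE xP; rewrite ffunE xP.
Qed.

Lemma sqr_normc_bell_amplitude : `|bell_amplitude| ^+ 2 = ((2^-1 : R) ^+ k)%:C.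
Proof.
have half_ge0 : 0 <= 2^-1 :> R by rewrite invr_ge0 ler0n.
rewrite ger0_norm ?ler0c ?exprn_ge0 ?sqrtr_ge0 // -rmorphXn /=.
by rewrite exprAC sqr_sqrtr.
Qed.

Lemma bell_pairs_normalized : normalized bell_pairs.
Proof.
rewrite /normalized sqnormE (@sum_bell_pairs (fun c _ => `|c| ^+ 2));
  last by move=> x; rewrite normr0 expr2 mul0r.
rewrite sumr_const card_ffun !card_ord sqr_normc_bell_amplitude.
by rewrite -rmorphMn /= -mulr_natr natrX -exprMn mulVf ?expr1n ?pnatr_eq0.
Qed.

Lemma product_state_double (u : 'I_(k + k) -> 'I_2 -> C) y :
  product_state u (double y)
  = \prod_i (u (lshift k i) (y i) * u (rshift k i) (y i)).
Proof.
rewrite ffunE big_split_ord big_split /=.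
by congr (_ * _); apply: eq_bigr => i _; rewrite ?double_lshift ?double_rshift.
Qed.

Lemma bell_pairs_overlap_le : product_overlap_le bell_pairs ((2^-1 : R) ^+ k).
Proof.
move=> u Hu; rewrite bell_pairs_normalized mul1r.
rewrite /inner (@sum_bell_pairs (fun c x => conjc c * product_state u x));
  last by move=> x; rewrite rmorph0 mul0r.
under eq_bigr => y _ do rewrite product_state_double.
rewrite -mulr_sumr.
rewrite -(bigA_distr_bigA (fun i b => u (lshift k i) b * u (rshift k i) b)).
rewrite normrM exprMn normcJ sqr_normc_bell_amplitude.
rewrite ler_piMr ?ler0c ?exprn_ge0 ?invr_ge0 ?ler0n //.
rewrite normr_prod -prodrXl; apply: prodr_ile1 => i _; rewrite exprn_ge0 ?normr_ge0 //=.
apply: le_trans (sqr_normc_dot_le _ _) _.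
by rewrite !normalized_qubit_sum ?mul1r.
Qed.

End BellPairs.

Lemma product_overlaps_pos N (psi : qstate N) : normalized psi ->
  exists2 e, product_overlaps psi e & 0 < e.
Proof.
move=> psi1; have [x psix] : exists x, psi x != 0.
  case: (pickP (fun x => psi x != 0)) => [x psix | psi0]; first by exists x.
  move: psi1; rewrite /normalized /sqnorm big1 => [/esym/eqP | y _].
    by rewrite oner_eq0.
  by move/negbFE/eqP: (psi0 y) => ->; rewrite mul0r.
pose u j b : C := (b == x j)%:R.
have inner_u : inner psi (product_state u) = conjc (psi x).
  rewrite /inner (bigD1 x) //= big1 => [|y yx].
    by rewrite ffunE big1 ?mulr1 ?addr0 // => j _; rewrite /u eqxx.
  have /existsP [j yxj] : [exists j, y j != x j].
    apply: contraNT yx => /existsPn yx; apply/eqP/ffunP => j.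
    by apply/eqP/negPn/yx.
  by rewrite ffunE (bigD1 j) //= /u (negbTE yxj) mul0r mulr0.
exists (complex.Re (`|psi x| ^+ 2)).
  exists u; first by move=> j; exact: normalized_qubit_delta.
  by rewrite inner_u conjcK sqr_normc mulrC.
have : 0 < `|psi x| ^+ 2 by rewrite exprn_gt0 ?normr_gt0.
by rewrite ltcE => /andP[].
Qed.

Lemma Eg_lower_bound N (psi : qstate N) k :
  normalized psi -> product_overlap_le psi ((2^-1 : R) ^+ k) -> k%:R <= Eg psi.
Proof.
move=> psi1 psiB; set S := product_overlaps psi.
have S_ub : ubound S ((2^-1 : R) ^+ k).
  move=> _ [u Hu <-]; have := psiB u Hu.
  by rewrite psi1 mul1r sqr_normc lecE => /andP[].
have [e Se e_gt0] := product_overlaps_pos psi1.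
have S_sup : has_sup S by split; [exists e | exists ((2^-1 : R) ^+ k)].
have sup_gt0 : 0 < sup S := lt_le_trans e_gt0 (sup_upper_bound S_sup Se).
have sup_le : sup S <= (2^-1 : R) ^+ k by apply: ge_sup => //; exists e.
have ln2_gt0 : 0 < ln (2 : R) by rewrite ln_gt0 // ltr1n.
have ln_sup : ln (sup S) <= - (k%:R * ln (2 : R)).
  apply: le_trans (_ : _ <= ln ((2^-1 : R) ^+ k)) _.
    by rewrite ler_ln ?posrE ?exprn_gt0 ?invr_gt0 ?ltr0n.
  by rewrite lnXn ?invr_gt0 ?ltr0n // lnV ?posrE ?ltr0n // mulNrn mulr_natl.
rewrite /Eg /log2 -/S -mulNr ler_pdivlMr //; lra.
Qed.

Lemma universal_Eg_unbounded (Psi : set (mqstate R)) : resource Psi -> universal Psi ->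
  forall k : nat, exists2 s, Psi s & k%:R <= Eg (projT2 s).
Proof.
move=> [_ Psi1] Psi_univ k.
have [s Ps [_ [f [f_inj [P HP]]]]] := Psi_univ _ _ (bell_pairs_normalized k).
exists s => //; apply: Eg_lower_bound; first exact: Psi1.
apply: achieves_product_overlap_le HP _.
exact (product_overlap_le_embed_state f_inj (@bell_pairs_overlap_le k)).
Qed.

End Qubits.

Theorem theorem7 (R : realType) (Psi : set (mqstate R)) :
  resource Psi -> universal Psi -> Eg_family Psi = +oo%E.
Proof.
move=> Psi_res Psi_univ; have Eg_ge_k := universal_Eg_unbounded Psi_res Psi_univ.
rewrite /Eg_family -(image_comp _ EFin) hasNub_ereal_sup //.
  move=> [M M_ub]; have [s Ps Ms] := Eg_ge_k (Num.truncn M).+1.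
  have := le_trans Ms (M_ub _ (ex_intro2 _ _ s Ps erefl)).
  by rewrite leNgt truncnS_gt.
by have [s Ps _] := Eg_ge_k 0%N; exists (Eg (projT2 s)), s.
Qed.
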